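(* For all $n\ge2$ and all $x,y\in\mathbb{H}^n$, $$\mathrm{th}\frac{\rho_{\mathbb{H}^n}(x,y)}{2}\le b_{\mathbb{H}^n,2}(x,y)\le\sqrt2\,\mathrm{th}\frac{\rho_{\mathbb{H}^n}(x,y)}{2},$$ and the constants $1$ and $\sqrt2$ are the best possible.
   Context: $\mathbb{H}^n=\{(x_1,\dots,x_n)\in\mathbb{R}^n:x_n>0\}$ is the upper half-space, and $d_{\mathbb{H}^n}(x)=x_n$ is the distance to its boundary. The hyperbolic metric of $\mathbb{H}^n$ is given by $\mathrm{ch}\,\rho_{\mathbb{H}^n}(x,y)=1+\frac{|x-y|^2}{2d_{\mathbb{H}^n}(x)d_{\mathbb{H}^n}(y)}$. For a domain $G\subsetneq\mathbb{R}^n$ and $p\ge1$, the Barrlund metric is $b_{G,p}(x,y)=\sup_{z\in\partial G}\frac{|x-y|}{(|x-z|^p+|z-y|^p)^{1/p}}$. *)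

From HB Require Import structures.
From mathcomp Require Import all_boot all_order all_algebra.
From mathcomp Require Import all_classical all_reals all_analysis.
Set Implicit Arguments. Unset Strict Implicit. Unset Printing Implicit Defensive.
Import Order.TTheory GRing.Theory Num.Theory.
Local Open Scope classical_set_scope.
Local Open Scope ring_scope.

Section Defs.
Variable R : realType.

Definition enorm n (x : 'rV[R]_n) : R := Num.sqrt (\sum_(i < n) (x 0 i) ^+ 2).

(* last coordinate x_n (indices are 0..n-1, so x_n is the entry of index n-1) *)
Definition lastc n (x : 'rV[R]_n) : R := \sum_(i < n | i.+1 == n) x 0 i.

Definition Hn n : set 'rV[R]_n := [set x | 0 < lastc x].
Definition dH n (x : 'rV[R]_n) : R := lastc x.

Definition bdry n (G : set 'rV[R]_n) : set 'rV[R]_n :=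
  [set z | forall e : R, 0 < e ->
     (exists u, G u /\ enorm (u - z) < e) /\ (exists v, ~ G v /\ enorm (v - z) < e)].

Definition ch (t : R) : R := (expR t + expR (- t)) / 2.
Definition sh (t : R) : R := (expR t - expR (- t)) / 2.
Definition th (t : R) : R := sh t / ch t.
Definition arch (s : R) : R := ln (s + Num.sqrt (s ^+ 2 - 1)).

(* hyperbolic metric of H^n: ch rho = 1 + |x-y|^2 / (2 x_n y_n), rho >= 0 *)
Definition rhoH n (x y : 'rV[R]_n) : R :=
  arch (1 + (enorm (x - y)) ^+ 2 / (2 * dH x * dH y)).

Definition barrlund n (G : set 'rV[R]_n) (p : R) (x y : 'rV[R]_n) : R :=
  sup [set r | exists2 z, bdry G z &
        r = enorm (x - y) / powR (powR (enorm (x - z)) p + powR (enorm (z - y)) p) p^-1].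

End Defs.

From HB Require Import structures.
From mathcomp Require Import all_boot all_order all_algebra.
From mathcomp Require Import all_classical all_reals all_analysis.
From mathcomp Require Import ring lra.
Set Implicit Arguments. Unset Strict Implicit. Unset Printing Implicit Defensive.
Import Order.TTheory GRing.Theory Num.Theory.
Local Open Scope classical_set_scope.
Local Open Scope ring_scope.

(* For x, y in H^n write a = x_n, b = y_n and d = |x - y|.
   1. The boundary of H^n lies in the hyperplane {z_n = 0}, and it contains
      the point [foot x y], the projection of (x + y)/2 onto that hyperplane.
   2. By the parallelogram law |x-z|^2 + |z-y|^2 = (|x-y|^2 + |x+y-2z|^2)/2,
      the denominator of the Barrlund quotient (p = 2) is minimal over
      {z_n = 0} exactly at [foot x y]; hence
          b_{H^n,2}(x,y) = d / sqrt(((a+b)^2 + d^2)/2).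
   3. Inverting ch rho = 1 + d^2/(2ab) gives th(rho/2) = d / sqrt(d^2 + 4ab).
   4. Therefore b_{H^n,2}(x,y) = sqrt(kappa2) * th(rho/2) with
          kappa2 = 2 (d^2 + 4ab) / ((a+b)^2 + d^2),
      and (a-b)^2 <= d^2, 4ab <= (a+b)^2 give 1 <= kappa2 <= 2.
   5. Sharpness: kappa2 = 2 for two points at the same height (n >= 2 is used
      here), while for the vertical pair at heights A and 1,
      kappa2 = (A+1)^2/(A^2+1), which tends to 1 as A grows. *)

Lemma sup_attained (R : realType) (S : set R) (M : R) :
  S M -> ubound S M -> sup S = M.
Proof.
move=> SM ubM; apply/le_anti/andP; split.
  by apply: ge_sup => //; exists M.
by apply: ub_le_sup => //; exists M.
Qed.

Lemma powR_norm2 (R : realType) (s t : R) : 0 <= s -> 0 <= t ->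
  powR (powR s 2 + powR t 2) 2^-1 = Num.sqrt (s ^+ 2 + t ^+ 2).
Proof.
move=> s0 t0; rewrite !powR_mulrn // powR12_sqrt //.
by rewrite addr_ge0 // sqr_ge0.
Qed.

Lemma div_sqrt_le (R : realType) (d P Q : R) : 0 <= d -> 0 < P -> P <= Q ->
  d / Num.sqrt Q <= d / Num.sqrt P.
Proof.
move=> d0 P0 PQ; apply: ler_wpM2l => //.
have Q0 : 0 < Q by apply: lt_le_trans PQ.
by rewrite lef_pV2 ?posrE ?sqrtr_gt0 // ler_sqrt // ltW.
Qed.

Section Coordinates.
Variables (R : realType) (k : nat).
Notation V := 'rV[R]_k.+1.

Lemma lastcE (x : V) : lastc x = x 0 ord_max.
Proof. by rewrite /lastc (big_pred1 ord_max). Qed.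

Lemma lastcB (u v : V) : lastc (u - v) = lastc u - lastc v.
Proof. by rewrite !lastcE !mxE. Qed.

Lemma enorm_ge0 (w : V) : 0 <= enorm w.
Proof. exact: sqrtr_ge0. Qed.

Lemma enorm_sq (w : V) : enorm w ^+ 2 = \sum_i w 0 i ^+ 2.
Proof. by rewrite sqr_sqrtr // sumr_ge0 // => i _; exact: sqr_ge0. Qed.

Lemma enorm_supp1 (w : V) j :
  (forall i, i != j -> w 0 i = 0) -> enorm w = `|w 0 j|.
Proof.
move=> w0; rewrite /enorm (bigD1 j) //= big1 ?addr0 ?sqrtr_sqr // => i /w0 ->.
by rewrite expr0n.
Qed.

Lemma lastc_sq_le (w : V) : lastc w ^+ 2 <= enorm w ^+ 2.
Proof.
rewrite lastcE enorm_sq (bigD1 ord_max) //= lerDl.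
by rewrite sumr_ge0 // => i _; exact: sqr_ge0.
Qed.

Lemma parallelogram (x y z : V) :
  enorm (x - z) ^+ 2 + enorm (z - y) ^+ 2 =
  (enorm (x - y) ^+ 2 + enorm (x + y - 2%:R *: z) ^+ 2) / 2.
Proof.
rewrite !enorm_sq -big_split -big_split /= mulr_suml.
by apply: eq_bigr => i _; rewrite !mxE; field.
Qed.

End Coordinates.

Section Boundary.
Variables (R : realType) (k : nat).
Notation V := 'rV[R]_k.+1.

(* Boundary points of H^n lie in the hyperplane {z_n = 0}: if z_n <> 0, no
   point of H^n (if z_n < 0) or of its complement (if z_n > 0) is closer to
   z than |z_n|. *)
Lemma bdry_Hn_lastc (z : V) : bdry (@Hn R k.+1) z -> lastc z = 0.
Proof.
move=> zb; have [zn|zn|//] := ltgtP (lastc z) 0.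
- have [[u [Hu uz]] _] := zb (- lastc z) ltac:(lra).
  have := lastc_sq_le (u - z); have := enorm_ge0 (u - z).
  rewrite lastcB; move: Hu; rewrite /Hn /=; nra.
- have [_ [v [Hv vz]]] := zb (lastc z) zn.
  have := lastc_sq_le (v - z); have := enorm_ge0 (v - z).
  rewrite lastcB; move: Hv; rewrite /Hn /= => /negP; rewrite -leNgt; nra.
Qed.

Definition foot (x y : V) : V :=
  \row_i (if i == ord_max then 0 else (x 0 i + y 0 i) / 2).

(* [foot x y] is a boundary point of H^n: it is not in H^n, and lifting it
   vertically by e/2 gives points of H^n arbitrarily close to it. *)
Lemma foot_bdry (x y : V) : bdry (@Hn R k.+1) (foot x y).
Proof.
move=> e e0; split.
- exists (foot x y + \row_i (if i == ord_max then e / 2 else 0)); split.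
    by rewrite /Hn /= lastcE !mxE eqxx; lra.
  rewrite addrC addKr (enorm_supp1 _ (j := ord_max)); last first.
    by move=> i /negbTE ni; rewrite mxE ni.
  by rewrite mxE eqxx ger0_norm; lra.
- exists (foot x y); split; first by rewrite /Hn /= lastcE mxE eqxx ltxx.
  rewrite subrr (enorm_supp1 _ (j := ord_max)) => [|i _]; last by rewrite mxE.
  by rewrite mxE normr0.
Qed.

(* The minimum of |x-z|^2 + |z-y|^2 over the hyperplane {z_n = 0}:
   it is a lower bound there ([barr_den_le]) attained at [foot x y]. *)
Definition barr_den (x y : V) : R :=
  ((lastc x + lastc y) ^+ 2 + enorm (x - y) ^+ 2) / 2.

Lemma barr_den_le (x y z : V) : lastc z = 0 ->
  barr_den x y <= enorm (x - z) ^+ 2 + enorm (z - y) ^+ 2.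
Proof.
move=> z0; rewrite parallelogram /barr_den.
have := lastc_sq_le (x + y - 2%:R *: z).
rewrite lastcE !mxE -!lastcE z0; lra.
Qed.

Lemma barr_den_foot (x y : V) :
  enorm (x - foot x y) ^+ 2 + enorm (foot x y - y) ^+ 2 = barr_den x y.
Proof.
rewrite parallelogram /barr_den (enorm_supp1 (j := ord_max) (w := x + y - _)).
  by rewrite !mxE eqxx -!lastcE real_normK ?num_real // mulr0 subr0; lra.
by move=> i /negbTE ni; rewrite !mxE ni; field.
Qed.

Lemma barrlund_Hn2 (x y : V) : Hn x -> Hn y ->
  barrlund (@Hn R k.+1) 2 x y = enorm (x - y) / Num.sqrt (barr_den x y).
Proof.
rewrite /Hn /= => hx hy.
have den0 : 0 < barr_den x y.
  by rewrite /barr_den; have := sqr_ge0 (enorm (x - y)); nra.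
apply: sup_attained.
  exists (foot x y); first exact: foot_bdry.
  by rewrite powR_norm2 ?enorm_ge0 // barr_den_foot.
move=> _ [z /bdry_Hn_lastc z0 ->]; rewrite powR_norm2 ?enorm_ge0 //.
by apply: div_sqrt_le => //; [exact: enorm_ge0 | exact: barr_den_le].
Qed.

End Boundary.

Lemma th_half (R : realType) (t : R) : th (t / 2) = (expR t - 1) / (expR t + 1).
Proof.
have h0 : 0 < expR (t / 2) by exact: expR_gt0.
have -> : expR t = expR (t / 2) ^+ 2 by rewrite -expRM_natr; congr expR; field.
rewrite /th /sh /ch expRN; set h := expR (t / 2).
have hn : h != 0 by rewrite gt_eqF.
have hs : h ^+ 2 + 1 != 0 by rewrite gt_eqF //; nra.
by field; rewrite hn hs.
Qed.

Lemma th_arch (R : realType) (u : R) : 0 <= u ->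
  th (arch (1 + u) / 2) = Num.sqrt (u / (u + 2)).
Proof.
move=> u0; rewrite /arch; set r := Num.sqrt _.
have r0 : 0 <= r by exact: sqrtr_ge0.
have r2 : r ^+ 2 = u * (u + 2) by rewrite sqr_sqrtr; [ring | nra].
rewrite th_half lnK ?posrE; last lra.
have q0 : 0 <= (1 + u + r - 1) / (1 + u + r + 1) by rewrite divr_ge0 //; lra.
rewrite -(ger0_norm q0) -sqrtr_sqr; congr Num.sqrt.
have cross : (1 + u + r - 1) ^+ 2 * (u + 2) = u * (1 + u + r + 1) ^+ 2.
  apply/eqP; rewrite -subr_eq0; apply/eqP.
  transitivity (2 * (r ^+ 2 - u * (u + 2))); first ring.
  by rewrite r2 subrr mulr0.
rewrite expr_div_n; apply/eqP; rewrite eqr_div; first exact/eqP.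
- by rewrite gt_eqF // exprn_gt0 //; lra.
- by rewrite gt_eqF //; lra.
Qed.

Section Comparison.
Variables (R : realType) (k : nat).
Notation V := 'rV[R]_k.+1.

Lemma th_rhoH (x y : V) : Hn x -> Hn y ->
  th (rhoH x y / 2) =
  enorm (x - y) / Num.sqrt (enorm (x - y) ^+ 2 + 4 * lastc x * lastc y).
Proof.
rewrite /Hn /= /rhoH /dH; set a := lastc x; set b := lastc y.
set d := enorm (x - y) => a0 b0.
have d0 : 0 <= d by exact: enorm_ge0.
have P0 : 0 < d ^+ 2 + 4 * a * b by have := sqr_ge0 d; nra.
rewrite th_arch; last by rewrite divr_ge0 ?sqr_ge0 //; nra.
have -> : d ^+ 2 / (2 * a * b) / (d ^+ 2 / (2 * a * b) + 2) =
          d ^+ 2 / (d ^+ 2 + 4 * a * b).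
  by field; rewrite !gt_eqF //; nra.
by rewrite sqrtrM ?sqr_ge0 // sqrtr_sqr ger0_norm // sqrtrV // ltW.
Qed.

Lemma th_rhoH_ge0 (x y : V) : Hn x -> Hn y -> 0 <= th (rhoH x y / 2).
Proof.
by move=> hx hy; rewrite th_rhoH // divr_ge0 ?sqrtr_ge0 ?enorm_ge0.
Qed.

Lemma th_rhoH_gt0 (x y : V) : Hn x -> Hn y -> 0 < enorm (x - y) ^+ 2 ->
  0 < th (rhoH x y / 2).
Proof.
move=> hx hy d0; rewrite th_rhoH // divr_gt0 //.
  by have := enorm_ge0 (x - y); nra.
by move: hx hy; rewrite /Hn /= sqrtr_gt0; nra.
Qed.

(* The squared ratio between the Barrlund metric and th(rho/2):
   kappa2 = (d^2 + 4ab) / barr_den, combining [barrlund_Hn2] and [th_rhoH]. *)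
Definition kappa2 (x y : V) : R :=
  (enorm (x - y) ^+ 2 + 4 * lastc x * lastc y) / barr_den x y.

Lemma barrlund_th (x y : V) : Hn x -> Hn y ->
  barrlund (@Hn R k.+1) 2 x y = Num.sqrt (kappa2 x y) * th (rhoH x y / 2).
Proof.
move=> hx hy; rewrite barrlund_Hn2 // th_rhoH // /kappa2.
have Q0 : 0 < barr_den x y.
  by move: hx hy; rewrite /Hn /= /barr_den; have := sqr_ge0 (enorm (x - y)); nra.
have P0 : 0 < enorm (x - y) ^+ 2 + 4 * lastc x * lastc y.
  by move: hx hy; rewrite /Hn /=; have := sqr_ge0 (enorm (x - y)); nra.
set P := _ + _ in P0 *; set Q := barr_den x y in Q0 *.
rewrite (sqrtrM Q^-1 (ltW P0)) (sqrtrV (ltW Q0)).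
have nP : Num.sqrt P != 0 by rewrite gt_eqF // sqrtr_gt0.
have nQ : Num.sqrt Q != 0 by rewrite gt_eqF // sqrtr_gt0.
by field; rewrite nP nQ.
Qed.

(* 1 <= kappa2 <= 2: the lower bound uses (x_n - y_n)^2 <= |x - y|^2,
   the upper bound 4 x_n y_n <= (x_n + y_n)^2. *)
Lemma kappa2_bounds (x y : V) : Hn x -> Hn y -> 1 <= kappa2 x y <= 2.
Proof.
rewrite /Hn /= /kappa2 /barr_den => a0 b0.
have := lastc_sq_le (x - y); rewrite lastcB => height_le.
have den0 : 0 < ((lastc x + lastc y) ^+ 2 + enorm (x - y) ^+ 2) / 2.
  by have := sqr_ge0 (enorm (x - y)); nra.
have := mulr_gt0 a0 b0; have := sqr_ge0 (lastc x - lastc y) => diff_sq ab0.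
by rewrite ler_pdivlMr // ler_pdivrMr //; apply/andP; split; nra.
Qed.

End Comparison.

Section Examples.
Variables (R : realType) (m : nat).
Notation V := 'rV[R]_m.+2.

Definition pt (s t : R) : V :=
  \row_i (if i == ord_max then t else if i == ord0 then s else 0).

Lemma lastc_pt s t : lastc (pt s t) = t.
Proof. by rewrite lastcE mxE eqxx. Qed.

Lemma Hn_pt s t : 0 < t -> Hn (pt s t).
Proof. by rewrite /Hn /= lastc_pt. Qed.

Lemma enorm_pt_sq s t s' t' :
  enorm (pt s t - pt s' t') ^+ 2 = (s - s') ^+ 2 + (t - t') ^+ 2.
Proof.
rewrite enorm_sq (bigD1 ord_max) // (bigD1 ord0) //= big1 => [|i /andP[im i0]].
  have n0 : (ord0 == ord_max :> 'I_m.+2) = false by [].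
  by rewrite !mxE eqxx n0 addr0 addrC.
by rewrite !mxE (negbTE i0) (negbTE im) subrr expr0n.
Qed.

Lemma kappa2_pt s t s' t' :
  kappa2 (pt s t) (pt s' t') =
  ((s - s') ^+ 2 + (t - t') ^+ 2 + 4 * t * t') /
  (((t + t') ^+ 2 + ((s - s') ^+ 2 + (t - t') ^+ 2)) / 2).
Proof. by rewrite /kappa2 /barr_den enorm_pt_sq !lastc_pt. Qed.

Lemma th_pt_gt0 s t s' t' :
  0 < t -> 0 < t' -> 0 < (s - s') ^+ 2 + (t - t') ^+ 2 ->
  0 < th (rhoH (pt s t) (pt s' t') / 2).
Proof.
by move=> t0 t'0 d0; apply: th_rhoH_gt0; rewrite ?enorm_pt_sq //; apply: Hn_pt.
Qed.

Lemma barrlund_level :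
  barrlund (@Hn R m.+2) 2 (pt 1 1) (pt 0 1) =
  Num.sqrt 2 * th (rhoH (pt 1 1) (pt 0 1) / 2).
Proof.
have h1 : Hn (pt 1 (1 : R)) by apply: Hn_pt; exact: ltr01.
have h0 : Hn (pt 0 (1 : R)) by apply: Hn_pt; exact: ltr01.
by rewrite barrlund_th // kappa2_pt; congr (Num.sqrt _ * _); field.
Qed.

Lemma barrlund_vertical A : 0 < A ->
  barrlund (@Hn R m.+2) 2 (pt 0 A) (pt 0 1) =
  Num.sqrt ((A + 1) ^+ 2 / (A ^+ 2 + 1)) * th (rhoH (pt 0 A) (pt 0 1) / 2).
Proof.
move=> A0; have hA : Hn (pt 0 A) := Hn_pt 0 A0.
have h1 : Hn (pt 0 (1 : R)) by apply: Hn_pt; exact: ltr01.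
rewrite barrlund_th // kappa2_pt subrr expr0n add0r.
have nA : A ^+ 2 + 1 != 0 by rewrite gt_eqF // ltr_pwDr // sqr_ge0.
have nD : (A + 1) ^+ 2 + (A - 1) ^+ 2 != 0.
  by rewrite gt_eqF //; have := sqr_ge0 (A + 1); have := sqr_ge0 (A - 1); nra.
by congr (Num.sqrt _ * _); field; rewrite nA nD.
Qed.

End Examples.

Lemma vertical_ratio_small (R : realType) (c : R) : 1 < c ->
  exists2 A : R, 1 < A & Num.sqrt ((A + 1) ^+ 2 / (A ^+ 2 + 1)) < c.
Proof.
move=> c1; set K := c ^+ 2 - 1.
have K0 : 0 < K by rewrite /K; nra.
exists (1 + 2 / K); first by rewrite ltrDl divr_gt0.
set A := 1 + 2 / K.
have AK : A * K = K + 2 by rewrite /A; field; rewrite gt_eqF.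
have A0 : 0 < A by rewrite /A addr_gt0 // divr_gt0.
have c0 : 0 <= c by lra.
rewrite -[ltRHS](ger0_norm c0) -sqrtr_sqr ltr_sqrt; last by apply: exprn_gt0; lra.
rewrite ltr_pdivrMr; last by have := sqr_ge0 A; lra.
have -> : c ^+ 2 = K + 1 by rewrite /K; ring.
nra.
Qed.

Lemma barrlund_th_bounds (R : realType) (k : nat) (x y : 'rV[R]_k.+1) :
  Hn x -> Hn y ->
  th (rhoH x y / 2) <= barrlund (@Hn R k.+1) 2 x y <=
  Num.sqrt 2 * th (rhoH x y / 2).
Proof.
move=> hx hy; rewrite barrlund_th //.
have /andP[k1 k2] := kappa2_bounds hx hy; have th0 := th_rhoH_ge0 hx hy.
have s1 : 1 <= Num.sqrt (kappa2 x y).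
  by rewrite -sqrtr1 ler_sqrt // (le_trans ler01 k1).
have s2 : Num.sqrt (kappa2 x y) <= Num.sqrt 2 by rewrite ler_sqrt.
by apply/andP; split; [rewrite -[leLHS]mul1r |]; exact: ler_wpM2r.
Qed.

Theorem lemma3p7 (R : realType) (n : nat) (hn : (2 <= n)%N) :
  (forall x y : 'rV[R]_n, Hn x -> Hn y ->
     th (rhoH x y / 2) <= barrlund (@Hn R n) 2 x y /\
     barrlund (@Hn R n) 2 x y <= Num.sqrt 2 * th (rhoH x y / 2)) /\
  (forall c : R, 1 < c -> exists x y : 'rV[R]_n, [/\ Hn x, Hn y &
     barrlund (@Hn R n) 2 x y < c * th (rhoH x y / 2)]) /\
  (forall c : R, c < Num.sqrt 2 -> exists x y : 'rV[R]_n, [/\ Hn x, Hn y &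
     c * th (rhoH x y / 2) < barrlund (@Hn R n) 2 x y]).
Proof.
case: n hn => [|[|m]] // _; split; [|split].
- by move=> x y hx hy; apply/andP; exact: barrlund_th_bounds.
- move=> c c1; have [A A1 Ac] := vertical_ratio_small c1.
  exists (pt m 0 A), (pt m 0 1); split; try (apply: Hn_pt; lra).
  rewrite barrlund_vertical ?ltr_pM2r //; try lra.
  by apply: th_pt_gt0; nra.
- move=> c c2; exists (pt m 1 1), (pt m 0 1); split; try (apply: Hn_pt; lra).
  rewrite barrlund_level ltr_pM2r //.
  by apply: th_pt_gt0; lra.
Qed.
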